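(* Consider BPSK transmission of a binary linear code $\mathcal{C}$ of length $n$ over an AWGN channel, ML decoding with error event $E$, the all-zero codeword transmitted, and a family of regions $\{\mathcal{R}(r), r\in\mathcal{I}\}$ satisfying assumptions A1–A2 of the context with pdf $g$ of $R$. Let $f_u$ be the conditional union bound $$ f_u(r)=\sum_{1\le d\le n} A_d\,p_2(r,d), $$ where $\{A_d\}$ is the weight distribution of $\mathcal{C}$ and $p_2(r,d)$ is the conditional pairwise error probability defined in the context. Suppose that, conditional on $\underline y\in\partial\mathcal{R}(r)$, $\underline y$ is uniformly distributed over $\partial\mathcal{R}(r)$. If $f_u(r)$ is a non-decreasing and continuous function of $r$, then the optimal parameter $r_1$ minimizing over $r^*$ the bound $\int_{-\infty}^{r^*} f_u(r)g(r)\,{\rm d}r+\int_{r^*}^{+\infty} g(r)\,{\rm d}r$ does not depend on the SNR but only on the weight spectrum of the code.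
   Context: System model: codeword bits $c_t$ are mapped to $s_t=1-2c_t$; $\underline y=\underline s+\underline z$ with $\underline z$ i.i.d. $\mathcal{N}(0,\sigma^2)$ (SNR determined by $\sigma$); ML decoding chooses the nearest signal vector; the all-zero codeword's image $\underline s^{(0)}$ is transmitted. (A1) $\mathcal{R}(r_1)\subset\mathcal{R}(r_2)$ for $r_1<r_2$; boundaries $\partial\mathcal{R}(r)$ pairwise disjoint with union over $r\in\mathcal{I}$ equal to $\mathbb{R}^n$. (A2) $R:\underline y\mapsto r$ for $\underline y\in\partial\mathcal{R}(r)$ has pdf $g(r)$ ($g\equiv0$ outside $\mathcal{I}$). For $\underline s^{(1)}$ the image of a weight-$d$ codeword, $p_2(r,d)={\rm Pr}\{\|\underline y-\underline s^{(1)}\|\le\|\underline y-\underline s^{(0)}\|\mid\underline y\in\partial\mathcal{R}(r)\}$ (this depends only on $d$ by symmetry). $f_u$ is assumed non-trivial: $f_u(r)\le1$ for some $r$. *)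

From HB Require Import structures.
From mathcomp Require Import all_boot all_order all_algebra.
From mathcomp Require Import all_classical all_reals all_analysis.
Set Implicit Arguments. Unset Strict Implicit. Unset Printing Implicit Defensive.
Import Order.TTheory GRing.Theory Num.Theory.
Import numFieldTopology.Exports numFieldNormedType.Exports.
Local Open Scope classical_set_scope.
Local Open Scope ring_scope.

Section Defs.
Variables (R : realType) (n : nat).

Definition bnd (A : set 'rV[R]_n) : set 'rV[R]_n := closure A `\` interior A.

Definition wt (c : 'rV['F_2]_n) : nat := #|[set i : 'I_n | c 0 i != 0]|.

Definition is_linear_code (C : {set 'rV['F_2]_n}) : bool :=
  (0 \in C) && [forall x in C, forall y in C, (x + y) \in C].

Definition weight_spectrum (C : {set 'rV['F_2]_n}) (d : nat) : nat :=
  #|[set c in C | wt c == d]|.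

Definition bpsk (c : 'rV['F_2]_n) : 'rV[R]_n :=
  \row_i (if c 0 i == 0 then 1 else -1).

Definition eucl (x : 'rV[R]_n) : R := Num.sqrt (\sum_i x 0 i ^+ 2).

Definition pairwise_err_set (c : 'rV['F_2]_n) : set 'rV[R]_n :=
  [set y | eucl (y - bpsk c) <= eucl (y - bpsk 0)].

Definition cond_union_bound (A : nat -> nat) (p2 : R -> nat -> R) (r : R) : R :=
  \sum_(1 <= d < n.+1) (A d)%:R * p2 r d.

Definition region_family (I : set R) (Reg : R -> set 'rV[R]_n) : Prop :=
  [/\ (forall r1 r2, I r1 -> I r2 -> r1 < r2 -> Reg r1 `<=` Reg r2),
      (forall r1 r2, I r1 -> I r2 -> r1 != r2 -> bnd (Reg r1) `&` bnd (Reg r2) = set0)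
    & \bigcup_(r in I) bnd (Reg r) = setT].

Definition split_bound (f g : R -> R) (rs : \bar R) : \bar R :=
  (\int[lebesgue_measure]_(r in [set r : R | (r%:E < rs)%E]) (f r * g r)%:E
   + \int[lebesgue_measure]_(r in [set r : R | (rs <= r%:E)%E]) (g r)%:E)%E.

End Defs.

Definition mutually_independent (R : realType) (d : measure_display)
  (T : measurableType d) (P : probability T R) (m : nat)
  (X : 'I_m -> {RV P >-> R}) : Prop :=
  forall B : 'I_m -> set R, (forall i, measurable (B i)) ->
    P (\bigcap_(i in [set: 'I_m]) (X i @^-1` B i)) =
    (\prod_(i < m) P (X i @^-1` B i))%E.

From HB Require Import structures.
From mathcomp Require Import all_boot all_order all_algebra.
From mathcomp Require Import all_classical all_reals all_analysis.
From mathcomp Require Import lra.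
Set Implicit Arguments.
Unset Strict Implicit.
Unset Printing Implicit Defensive.
Import Order.TTheory GRing.Theory Num.Theory.
Import numFieldTopology.Exports numFieldNormedType.Exports.
Local Open Scope classical_set_scope.
Local Open Scope ring_scope.

(* Let r1 be the supremum of the sublevel set {r | f_u(r) <= 1}; it is
   determined by f_u, i.e. by the weight spectrum and p_2, and not by the
   noise.  Since f_u is nondecreasing and continuous, f_u <= 1 below r1 and
   f_u >= 1 from r1 on.  Moving the split point r* away from r1 in either
   direction changes the integrand on the slab between r1 and r* from
   min(f_u, 1) g to max(f_u, 1) g, so the bound can only grow. *)

Lemma ereal_supD_le (R : realType) (SA SB : set (\bar R)) (c : \bar R) :
  (forall x y, SA x -> SB y -> (x + y <= c)%E) -> SA 0%E -> SB 0%E ->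
  (forall x, SA x -> (0 <= x)%E) -> (forall y, SB y -> (0 <= y)%E) ->
  (ereal_sup SA + ereal_sup SB <= c)%E.
Proof.
move=> le_c A0 B0 A_ge0 B_ge0.
have c_ge0 := le_c _ _ A0 B0; rewrite adde0 in c_ge0.
case: c le_c c_ge0 => [r| |] le_c c_ge0 //; last by rewrite leey.
have B_fin y : SB y -> y \is a fin_num.
  move=> By; rewrite ge0_fin_numE ?B_ge0 //.
  by apply: le_lt_trans (ltry r); rewrite -[y]add0e le_c.
have supA_fin : ereal_sup SA \is a fin_num.
  rewrite ge0_fin_numE; last exact: ereal_sup_ubound.
  apply: le_lt_trans (ltry r); apply: ge_ereal_sup => x Ax.
  by rewrite -[x]adde0 le_c.
suff : (ereal_sup SB <= r%:E - ereal_sup SA)%E by rewrite leeBrDr // addeC.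
apply: ge_ereal_sup => y By; rewrite leeBrDr // addeC -leeBrDr ?B_fin //.
by apply: ge_ereal_sup => x Ax; rewrite leeBrDr ?B_fin // le_c.
Qed.

(* No measurability of the integrand is assumed: for nonnegative [f] the
   integral is the supremum of the integrals of the simple functions below
   [f], and [g] in the theorem is not known to be measurable. *)
Section ge0_integral_nonmeasurable.
Context d (T : measurableType d) (R : realType).
Variable mu : {measure set T -> \bar R}.
Local Open Scope ereal_scope.
Import HBNNSimple.

Lemma nnsfun_le_restrict_eq0 {D : set T} {f : T -> \bar R}
    {s : {nnsfun T >-> R}} {x : T} :
  (s x)%:E <= (f \_ D) x -> ~ D x -> s x = 0%R.
Proof.
move=> sf Dx; apply/eqP; rewrite eq_le fun_ge0 andbT -lee_fin.
by rewrite patchE (memNset Dx) in sf.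
Qed.

Lemma proj_nnsfun_le_restrict (A D : set T) (mA : measurable A)
    (f : T -> \bar R) (s : {nnsfun T >-> R}) :
  A `<=` D -> (forall x, (s x)%:E <= (f \_ D) x) ->
  forall x, (proj_nnsfun s mA x)%:E <= (f \_ A) x.
Proof.
move=> AD sf x; rewrite /= measurable_realfun.mindicE patchE.
have [Ax|nAx] := boolP (x \in A); last by rewrite mulr0.
by rewrite mulr1; move: (sf x); rewrite patchE mem_set //; apply: AD; exact: set_mem.
Qed.

Lemma ge0_le_integral_nonmeas (D : set T) (f h : T -> \bar R) :
  (forall x, 0 <= f x) -> (forall x, D x -> f x <= h x) ->
  \int[mu]_(x in D) f x <= \int[mu]_(x in D) h x.
Proof.
move=> f0 fh.
rewrite !ge0_integralE //; last by move=> x Dx; exact: le_trans (f0 x) (fh x Dx).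
apply: ge_ereal_sup => _ [s /= sf <-]; apply: ereal_sup_ubound; exists s => //= x.
apply: le_trans (sf x) _; rewrite !patchE; case: ifP => // /set_mem; exact: fh.
Qed.

Section setU.
Variables (A B : set T) (mA : measurable A) (mB : measurable B).
Hypothesis AB0 : A `&` B = set0.
Variables (f : T -> \bar R) (f0 : forall x, 0 <= f x).

Let le_integral_setU :
  \int[mu]_(x in A `|` B) f x <= \int[mu]_(x in A) f x + \int[mu]_(x in B) f x.
Proof.
rewrite !ge0_integralE //; apply: ge_ereal_sup => _ [s /= sf <-].
have -> : sintegral mu s =
    sintegral mu (add_nnsfun (proj_nnsfun s mA) (proj_nnsfun s mB)).
  apply: eq_sintegral => x /=; rewrite !measurable_realfun.mindicE.
  have [Ax|nAx] := pselect (A x); have [Bx|nBx] := pselect (B x).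
  - by have : (A `&` B) x by []; rewrite AB0.
  - by rewrite (mem_set Ax) memNset //= mulr1 mulr0 addr0.
  - by rewrite (mem_set Bx) memNset //= mulr1 mulr0 add0r.
  - by rewrite !memNset //= !mulr0 addr0 (nnsfun_le_restrict_eq0 (sf x)) //; case.
rewrite sintegralD; apply: leeD; apply: ereal_sup_ubound.
- by exists (proj_nnsfun s mA) => //; exact: proj_nnsfun_le_restrict (@subsetUl _ A B) sf.
- by exists (proj_nnsfun s mB) => //; exact: proj_nnsfun_le_restrict (@subsetUr _ A B) sf.
Qed.

Let ge_integral_setU :
  \int[mu]_(x in A) f x + \int[mu]_(x in B) f x <= \int[mu]_(x in A `|` B) f x.
Proof.
have simple_ge0 D : forall z, [set sintegral mu s | s in
    [set s : {nnsfun T >-> R} | forall x, (s x)%:E <= (f \_ D) x]] z -> 0 <= z.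
  by move=> _ [s _ <-]; exact: sintegral_ge0.
have simple0 D : [set sintegral mu s | s in
    [set s : {nnsfun T >-> R} | forall x, (s x)%:E <= (f \_ D) x]] 0.
  by exists nnsfun0; [move=> x; rewrite patchE; case: ifP | exact: sintegral0].
rewrite !ge0_integralE //.
apply: ereal_supD_le; try exact: simple0; try exact: simple_ge0.
move=> _ _ [s1 /= s1f <-] [s2 /= s2f <-].
rewrite -sintegralD; apply: ereal_sup_ubound; exists (add_nnsfun s1 s2) => //= x.
have [Ax|nAx] := pselect (A x).
- have nBx : ~ B x by move=> Bx; have : (A `&` B) x by []; rewrite AB0.
  rewrite (nnsfun_le_restrict_eq0 (s2f x)) // addr0.
  by move: (s1f x); rewrite !patchE !mem_set //; left.
- rewrite (nnsfun_le_restrict_eq0 (s1f x)) // add0r.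
  have [Bx|nBx] := pselect (B x); last first.
    by rewrite (nnsfun_le_restrict_eq0 (s2f x)) // patchE; case: ifP.
  by move: (s2f x); rewrite !patchE !mem_set //; right.
Qed.

Lemma ge0_integral_setU_nonmeas :
  \int[mu]_(x in A `|` B) f x = \int[mu]_(x in A) f x + \int[mu]_(x in B) f x.
Proof. by apply/eqP; rewrite eq_le le_integral_setU ge_integral_setU. Qed.

End setU.
End ge0_integral_nonmeasurable.

Section split_bound.
Variable R : realType.
Local Open Scope ereal_scope.

Definition EFin_lt (c : \bar R) := [set r : R | r%:E < c].
Definition EFin_ge (c : \bar R) := [set r : R | c <= r%:E].

Lemma measurable_EFin_lt c : measurable (EFin_lt c).
Proof.
case: c => [t| |].
- have -> : EFin_lt t%:E = `]-oo, t[%classic.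
    by apply/seteqP; split => x /=; rewrite in_itv.
  exact: measurable_itv.
- by have -> : EFin_lt +oo = setT by apply/seteqP; split => x // _; exact: ltey.
- by have -> : EFin_lt -oo = set0 by apply/seteqP; split => x //=; rewrite ltNge leNye.
Qed.

Lemma measurable_EFin_ge c : measurable (EFin_ge c).
Proof.
case: c => [t| |].
- have -> : EFin_ge t%:E = `[t, +oo[%classic.
    by apply/seteqP; split => x /=; rewrite in_itv /= andbT.
  exact: measurable_itv.
- by have -> : EFin_ge +oo = set0 by apply/seteqP; split => x //=; rewrite leNgt ltey.
- by have -> : EFin_ge -oo = setT by apply/seteqP; split => x // _; exact: leNye.
Qed.

Lemma EFin_ltI_ge c : EFin_lt c `&` EFin_ge c = set0.
Proof. by apply/seteqP; split => x // [xc]; rewrite /EFin_ge /= leNgt xc. Qed.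

Variables (a b : \bar R).
Hypothesis ab : a <= b.

Lemma EFin_lt_split : EFin_lt b = EFin_lt a `|` (EFin_ge a `&` EFin_lt b).
Proof.
apply/seteqP; split => x /=.
- by move=> xb; case: (leP a x%:E) => xa; [right|left].
- by case=> [xa|[_ xb]] //; exact: lt_le_trans xa ab.
Qed.

Lemma EFin_ge_split : EFin_ge a = (EFin_ge a `&` EFin_lt b) `|` EFin_ge b.
Proof.
apply/seteqP; split => x /=.
- by move=> xa; case: (ltP x%:E b) => xb; [left|right].
- by case=> [[xa _]|xb] //; exact: le_trans ab xb.
Qed.

Variables (f g : R -> R).
Hypotheses (fg_ge0 : forall r, (0 <= f r * g r)%R) (g_ge0 : forall r, (0 <= g r)%R).

Let measurable_slab : measurable (EFin_ge a `&` EFin_lt b).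
Proof.
by apply: measurableI; [exact: measurable_EFin_ge | exact: measurable_EFin_lt].
Qed.

Lemma split_bound_upper : split_bound f g b =
  \int[lebesgue_measure]_(r in EFin_lt a) (f r * g r)%:E
  + \int[lebesgue_measure]_(r in EFin_ge a `&` EFin_lt b) (f r * g r)%:E
  + \int[lebesgue_measure]_(r in EFin_ge b) (g r)%:E.
Proof.
rewrite /split_bound -/(EFin_lt b) -/(EFin_ge b) {1}EFin_lt_split.
rewrite ge0_integral_setU_nonmeas //; first exact: measurable_EFin_lt.
by rewrite setIA EFin_ltI_ge set0I.
Qed.

Lemma split_bound_lower : split_bound f g a =
  \int[lebesgue_measure]_(r in EFin_lt a) (f r * g r)%:E
  + \int[lebesgue_measure]_(r in EFin_ge a `&` EFin_lt b) (g r)%:E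
  + \int[lebesgue_measure]_(r in EFin_ge b) (g r)%:E.
Proof.
rewrite /split_bound -/(EFin_lt a) -/(EFin_ge a) {1}EFin_ge_split.
rewrite ge0_integral_setU_nonmeas ?addeA //; first exact: measurable_EFin_ge.
by rewrite -setIA EFin_ltI_ge setI0.
Qed.

End split_bound.

Lemma split_bound_threshold_min (R : realType) (f g : R -> R) (t rs : \bar R) :
  (forall r, (0 <= f r * g r)%R) -> (forall r, (0 <= g r)%R) ->
  (forall r, (r%:E < t)%E -> (f r <= 1)%R) ->
  (forall r, (t <= r%:E)%E -> (1 <= f r)%R) ->
  (split_bound f g t <= split_bound f g rs)%E.
Proof.
move=> fg_ge0 g_ge0 f_le1 f_ge1.
have [t_le|rs_lt] := leP t rs.
- rewrite (split_bound_upper t_le) // (split_bound_lower t_le) //.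
  apply: leeD => //; apply: leeD => //.
  apply: ge0_le_integral_nonmeas => [r|r [tr _]]; rewrite lee_fin //.
  by rewrite -[X in (X <= _)%R]mul1r ler_wpM2r // f_ge1.
- have rs_le := ltW rs_lt.
  rewrite (split_bound_upper rs_le) // (split_bound_lower rs_le) //.
  apply: leeD => //; apply: leeD => //.
  apply: ge0_le_integral_nonmeas => [r|r [_ rt]]; rewrite lee_fin //.
  by rewrite -[X in (_ <= X)%R]mul1r ler_wpM2r // f_le1.
Qed.

Section sublevel_sup.
Variables (R : realType) (f : R -> R) (c : R).

Definition sublevel_sup : \bar R := ereal_sup (EFin @` [set x | f x <= c]).

Lemma nondecreasing_le_lt_sublevel_sup x :
  {homo f : u v / u <= v} -> (x%:E < sublevel_sup)%E -> f x <= c.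
Proof.
move=> f_nd /ereal_sup_gt [_ [t ft <-]]; rewrite lte_fin => xt.
exact: le_trans (f_nd _ _ (ltW xt)) ft.
Qed.

Lemma continuous_ge_sublevel_sup_le x :
  continuous f -> (sublevel_sup <= x%:E)%E -> c <= f x.
Proof.
move=> f_cont sup_le_x; rewrite leNgt; apply/negP => fx_lt_c.
have [e /= e0 near_lt_c] :=
  (nbhs_ballP _ _).1 (@cvgr_lt _ _ _ _ f (f x) (f_cont x) _ fx_lt_c).
have x_e : ball x e (x + e / 2).
  by rewrite /ball /= opprD addrA subrr add0r normrN gtr0_norm; lra.
have : ((x + e / 2)%:E <= sublevel_sup)%E.
  by apply: ereal_sup_ubound; exists (x + e / 2) => //; exact: ltW (near_lt_c _ x_e).
by move/le_trans/(_ sup_le_x); rewrite lee_fin; lra.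
Qed.

End sublevel_sup.

Lemma exists_wt (n d : nat) : (d <= n)%N -> exists c : 'rV['F_2]_n, wt c = d.
Proof.
move=> dn; exists (\row_(i < n) (if (i < d)%N then 1 else 0)).
have widen_inj : injective (widen_ord dn).
  by move=> i j eq_ij; apply/val_inj; exact: (congr1 val eq_ij).
rewrite /wt -[RHS](card_ord d) -(card_imset _ widen_inj).
apply: eq_card => i; apply/idP/idP.
- move/set_mem; rewrite /= mxE; case: ifP => id; last by rewrite eqxx.
  by move=> _; apply/imsetP; exists (Ordinal id) => //; apply/val_inj.
- by case/imsetP => j _ ->; apply/mem_set; rewrite /= mxE (ltn_ord j) oner_eq0.
Qed.

Lemma cond_union_bound_ge0 (R : realType) n (A : nat -> nat)
    (p2 : R -> nat -> R) r :
  (forall d, (1 <= d <= n)%N -> 0 <= p2 r d) -> 0 <= cond_union_bound n A p2 r.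
Proof.
move=> p2_ge0; rewrite /cond_union_bound big_nat_cond.
apply: sumr_ge0 => d /andP[/andP[d_ge1 d_le] _].
by rewrite mulr_ge0 // p2_ge0 // d_ge1 -ltnS.
Qed.

Theorem theorem3 (R : realType) (n : nat) (I : set R)
  (Reg : R -> set 'rV[R]_n) (Rmap : 'rV[R]_n -> R)
  (U : R -> set 'rV[R]_n -> R) (p2 : R -> nat -> R) :
  region_family I Reg ->
  (forall y, I (Rmap y) /\ bnd (Reg (Rmap y)) y) ->
  (forall r A, 0 <= U r A <= 1) ->
  (forall r, I r -> U r (bnd (Reg r)) = 1) ->
  (forall r, I r -> forall c : 'rV['F_2]_n, p2 r (wt c) = U r (pairwise_err_set c)) ->
  exists Phi : (nat -> nat) -> \bar R,
  forall C : {set 'rV['F_2]_n}, is_linear_code C ->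
  let fu := cond_union_bound n (weight_spectrum C) p2 in
  {homo fu : x y / x <= y} -> continuous fu -> (exists r, fu r <= 1) ->
  forall sigma : R, 0 < sigma ->
  forall (d : measure_display) (T : measurableType d) (P : probability T R)
         (z : 'I_n -> {RV P >-> R}) (g : R -> R),
  (forall i (A : set R), measurable A ->
      distribution P (z i) A = normal_prob 0 sigma A) ->
  mutually_independent z ->
  let y := fun w : T => bpsk R 0 + \row_i z i w in
  measurable_fun setT (Rmap \o y) ->
  (forall r, 0 <= g r) ->
  (forall B : set R, measurable B ->
      P ((Rmap \o y) @^-1` B) = (\int[lebesgue_measure]_(r in B) (g r)%:E)%E) ->
  (forall r, ~ I r -> g r = 0) ->
  (forall (A : set 'rV[R]_n) (B : set R), measurable B -> measurable (y @^-1` A) ->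
      P (y @^-1` A `&` (Rmap \o y) @^-1` B) =
      (\int[lebesgue_measure]_(r in B) (g r * U r A)%:E)%E) ->
  forall rs : \bar R,
    (split_bound fu g (Phi (weight_spectrum C)) <= split_bound fu g rs)%E.
Proof.
move=> _ _ U01 _ p2U.
exists (fun A => sublevel_sup (cond_union_bound n A p2) 1).
move=> C _ fu fu_nd fu_cont _ _ _ _ _ _ _ g _ _ _ _ g_ge0 _ g_out _ rs.
have fu_g_ge0 r : 0 <= fu r * g r.
  have [Ir|nIr] := pselect (I r); last by rewrite g_out // mulr0.
  rewrite mulr_ge0 // cond_union_bound_ge0 // => k /andP[_ k_le].
  have [c <-] := exists_wt k_le.
  by rewrite p2U //; case/andP: (U01 r (pairwise_err_set c)).
apply: split_bound_threshold_min => // r.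
- exact: nondecreasing_le_lt_sublevel_sup.
- exact: continuous_ge_sublevel_sup_le.
Qed.
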